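(* Let $J^*_T=\inf_{\pi\in\Pi}J_T(\pi)$ and let $\Pi^*_T=\{\pi\in\Pi: J_T(\pi)=J^*_T\}$ for $T\in[0,\infty]$. Then: (1) $J^*_T$ does not depend on $T$, i.e. $J^*_T=J^*_0=:J^*$ for all $T\in[0,\infty]$; (2) for all $T_1<T_2$ in $[0,\infty]$, $\Pi^*_{T_1}\subseteq\Pi^*_{T_2}$; (3) for every $p_0\in|G|^k$ and every $T>D_G+J^*/\phi_{\min}$ (with $T$ finite), $\Pi^*_T\cap\Pi_{p_0}\neq\emptyset$, where $\Pi_{p_0}=\{\pi\in\Pi:\pi(0)=p_0\}$.
   Context: Let $G=(V,E,A,\phi)$ be a finite connected undirected graph with node set $V$, edge set $E$, edge lengths $A:E\to\mathbb{R}_{>0}$ and node weights $\phi:V\to\mathbb{R}_{>0}$; $\phi_{\min}=\min_v\phi(v)$. Let $|G|$ be its metric graph (each edge $e$ realized as a closed interval of length $A(e)$ glued at its endpoints) with shortest-path metric $d$, and let $D_G$ be the diameter of $(|G|,d)$. Fix $k\ge1$ robots $r_1,\dots,r_k$, and equip $|G|^k$ with $d_k(p,p')=\max_i d(p_i,p'_i)$. Feasible joint strategies: $\Pi=\{\pi\in C([0,\infty),|G|^k):\ d_k(\pi(t),\pi(t'))\le|t-t'|\ \forall t,t'\ge0\}$, $\pi=(\pi_{r_1},\dots,\pi_{r_k})$. For $v\in V$, $t\ge0$: $\tau^\pi(v,t)=\sup\{t'\le t:\pi_r(t')=v\text{ for some }r\}$ if nonempty, else $0$; $L^\pi_v(t)=t-\tau^\pi(v,t)$;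 $M^\pi(t)=\max_{v}\phi(v)L^\pi_v(t)$. For finite $T\ge 0$, $J_T(\pi)=\sup_{t\ge T}M^\pi(t)\in[0,\infty]$; $J_\infty(\pi)=\limsup_{t\to\infty}M^\pi(t)$. *)

From mathcomp Require Import all_boot.
From Stdlib Require Import Reals.
From Coquelicot Require Import Coquelicot.

Set Implicit Arguments.
Unset Strict Implicit.
Unset Printing Implicit Defensive.

Local Open Scope R_scope.

Section MetricGraph.

(* An undirected graph: node set V, edge set E (finite types), each edge e has
   two endpoints src e, tgt e (the orientation is only a naming convention),
   lengths A e > 0 and node weights phi v > 0. *)
Variables (V E : finType) (src tgt : E -> V) (A : E -> R) (phi : V -> R).

Definition simple_graph : Prop :=
  (forall e, src e <> tgt e) /\
  (forall e e', (src e = src e' /\ tgt e = tgt e') \/ (src e = tgt e' /\ tgt e = src e') -> e = e').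

(* Walks in the combinatorial graph: lists of edges with a traversal direction
   (true = from src to tgt). *)
Fixpoint is_walk (u : V) (w : list (E * bool)) (v : V) : Prop :=
  match w with
  | nil => u = v
  | (e, b) :: w' =>
      (if b then src e else tgt e) = u /\ is_walk (if b then tgt e else src e) w' v
  end.

Fixpoint walk_len (w : list (E * bool)) : R :=
  match w with
  | nil => 0
  | (e, _) :: w' => A e + walk_len w'
  end.

Definition connected : Prop := forall u v : V, exists w, is_walk u w v.

(* Points of the metric graph |G|: either a node, or an interior point of an
   edge e at distance s from src e (0 < s < A e).  Each point of |G| has
   exactly one valid representation. *)
Inductive Point : Type :=
  | PV : V -> Point
  | PE : E -> R -> Point.

Definition valid_point (x : Point) : Prop :=
  match x with
  | PV _ => True
  | PE e s => 0 < s < A e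
  end.

Definition anchor (x : Point) (a : V) (o : R) : Prop :=
  match x with
  | PV v => a = v /\ o = 0
  | PE e s => (a = src e /\ o = s) \/ (a = tgt e /\ o = A e - s)
  end.

(* Lengths of the (combinatorial descriptions of) paths in |G| from x to y:
   either straight along a common edge, or leave x's cell through an endpoint,
   follow a walk of the graph, and enter y's cell through an endpoint. *)
Definition path_length (x y : Point) (r : R) : Prop :=
  (exists e s s', x = PE e s /\ y = PE e s' /\ r = Rabs (s - s')) \/
  (exists a oa b ob w, anchor x a oa /\ anchor y b ob /\ is_walk a w b /\
                       r = oa + walk_len w + ob).

Definition dist (x y : Point) : R := real (Glb_Rbar (path_length x y)).

Definition diameter : Rbar :=
  Lub_Rbar (fun r => exists x y, valid_point x /\ valid_point y /\ r = dist x y).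

Definition phi_min : R := real (Glb_Rbar (fun r => exists v, r = phi v)).

Variable k : nat.

Definition Config := 'I_k -> Point.

Definition valid_config (p : Config) : Prop := forall i, valid_point (p i).

Definition dist_k (p p' : Config) : R := \big[Rmax/0]_(i < k) dist (p i) (p' i).

(* Joint strategies: maps [0,oo) -> |G|^k (values on t < 0 are irrelevant).
   1-Lipschitz for d_k (which implies continuity). *)
Definition Strategy := R -> Config.

Definition feasible (pi : Strategy) : Prop :=
  (forall t, 0 <= t -> valid_config (pi t)) /\
  (forall t t', 0 <= t -> 0 <= t' -> dist_k (pi t) (pi t') <= Rabs (t - t')).

(* tau^pi(v,t): last visit time of node v up to time t (0 if never visited). *)
Definition visit_times (pi : Strategy) (v : V) (t : R) (t' : R) : Prop :=
  0 <= t' <= t /\ exists r : 'I_k, pi t' r = PV v.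

Definition last_visit (pi : Strategy) (v : V) (t : R) : R :=
  match Lub_Rbar (visit_times pi v t) with
  | Finite s => s
  | _ => 0
  end.

Definition latency (pi : Strategy) (v : V) (t : R) : R := t - last_visit pi v t.

Definition weighted_max_latency (pi : Strategy) (t : R) : R :=
  \big[Rmax/0]_(v : V) (phi v * latency pi v t).

(* Infimum of a set of extended reals not containing -oo. *)
Definition Rbar_inf (P : Rbar -> Prop) : Rbar := Glb_Rbar (fun r => P (Finite r)).

(* J_T(pi) for T in [0,oo]: sup_{t >= T} M(t) for finite T, and
   limsup_{t -> oo} M(t) = inf_{T >= 0} sup_{t >= T} M(t) for T = +oo. *)
Definition J_fin (pi : Strategy) (T : R) : Rbar :=
  Lub_Rbar (fun m => exists t, T <= t /\ m = weighted_max_latency pi t).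

Definition J (T : Rbar) (pi : Strategy) : Rbar :=
  match T with
  | Finite T0 => J_fin pi T0
  | _ => Rbar_inf (fun j => exists T0, 0 <= T0 /\ j = J_fin pi T0)
  end.

Definition Jstar (T : Rbar) : Rbar := Rbar_inf (fun j => exists pi, feasible pi /\ j = J T pi).

Definition optimal (T : Rbar) (pi : Strategy) : Prop := feasible pi /\ J T pi = Jstar T.

End MetricGraph.

(* Shifting a strategy in time shows that the optimal value of sup_(t >= T) M(t)
   does not depend on T; as J_T(pi) is nonincreasing in T, a strategy optimal for
   J_T1 is then optimal for J_T2.
   Optimal strategies for J_0 exist: feasible strategies are 1-Lipschitz maps into
   the compact metric graph, so a minimising sequence has a pointwise convergent
   subsequence (Arzela-Ascoli, by a diagonal argument), and the latencies of the
   limit are no larger, because visits of a node pass to the limit.  Starting from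
   p0, the robots first travel, within a time c > D_G, to the initial position of
   such an optimal strategy and then follow it.  After time c + J*/phi_min every
   node has been visited since the end of this prefix, so for t >= T the weighted
   latencies are bounded by J* = J*_T. *)

From Pilot Require Import Defs.
From mathcomp Require Import all_boot zify.
From Stdlib Require Import Reals Lra Lia Classical IndefiniteDescription.
From Coquelicot Require Import Coquelicot.

Local Open Scope R_scope.
Set Implicit Arguments.
Unset Strict Implicit.

(** * Suprema, infima and real sequences *)

Lemma Lub_Rbar_ub (S : R -> Prop) x : S x -> Rbar_le x (Lub_Rbar S).
Proof. by case: (Lub_Rbar_correct S) => ub _; apply: ub. Qed.

Lemma Lub_Rbar_le (S : R -> Prop) (c : R) : (forall x, S x -> x <= c) -> Rbar_le (Lub_Rbar S) c.
Proof. by case: (Lub_Rbar_correct S) => _ lub H; apply: lub. Qed.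

Lemma Lub_Rbar_subset (S1 S2 : R -> Prop) :
  (forall x, S1 x -> S2 x) -> Rbar_le (Lub_Rbar S1) (Lub_Rbar S2).
Proof.
by case: (Lub_Rbar_correct S1) => _ lub H; apply: lub => x /H; apply: Lub_Rbar_ub.
Qed.

Lemma Lub_Rbar_empty (S : R -> Prop) : (forall x, ~ S x) -> Lub_Rbar S = m_infty.
Proof.
move=> H; case: (Lub_Rbar_correct S) => _ lub.
by move: (lub m_infty (fun x Sx => False_ind _ (H x Sx))); case: (Lub_Rbar S).
Qed.

Lemma Lub_Rbar_finite (S : R -> Prop) x0 M : S x0 -> (forall x, S x -> x <= M) ->
  exists g, Lub_Rbar S = Finite g /\ (forall x, S x -> x <= g) /\
    forall eps, 0 < eps -> exists x, S x /\ g - eps < x.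
Proof.
move=> Sx0 HM; case: (Lub_Rbar_correct S) => ub lub.
case E: (Lub_Rbar S) => [g| |]; rewrite E in ub lub.
- exists g; split => //; split; first by move=> x /ub.
  move=> eps He; apply: NNPP => Hn.
  have : g <= g - eps; last lra.
  apply: (lub (Finite (g - eps))) => x Sx /=.
  by apply: Rnot_lt_le => Hlt; apply: Hn; exists x.
- by have := lub (Finite M) HM.
- by have := ub x0 Sx0.
Qed.

Lemma Glb_Rbar_lb (S : R -> Prop) x : S x -> Rbar_le (Glb_Rbar S) x.
Proof. by case: (Glb_Rbar_correct S) => lb _; apply: lb. Qed.

Lemma Glb_Rbar_ge (S : R -> Prop) (m : Rbar) :
  (forall x, S x -> Rbar_le m x) -> Rbar_le m (Glb_Rbar S).
Proof. by case: (Glb_Rbar_correct S) => _ glb; apply: glb. Qed.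

Lemma Glb_Rbar_approx (S : R -> Prop) g : Glb_Rbar S = Finite g ->
  forall eps, 0 < eps -> exists x, S x /\ x < g + eps.
Proof.
move=> Hg eps He; apply: NNPP => Hn.
have : Rbar_le (g + eps) (Glb_Rbar S) by
  apply: Glb_Rbar_ge => x Sx /=; apply: Rnot_lt_le => Hlt; apply: Hn; exists x.
rewrite Hg /=; lra.
Qed.

Lemma Glb_Rbar_finite (S : R -> Prop) x0 m : S x0 -> (forall x, S x -> m <= x) ->
  exists g, Glb_Rbar S = Finite g /\ (forall x, S x -> g <= x) /\
    (forall m', (forall x, S x -> m' <= x) -> m' <= g) /\
    forall eps, 0 < eps -> exists x, S x /\ x < g + eps.
Proof.
move=> Sx0 Hm; case E: (Glb_Rbar S) => [g| |].
- exists g; split => //; split; first by move=> x /Glb_Rbar_lb; rewrite E.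
  split; last exact: Glb_Rbar_approx.
  by move=> m' Hm'; move: (Glb_Rbar_ge (m := m') Hm'); rewrite E.
- by move: (Glb_Rbar_lb Sx0); rewrite E.
- by move: (Glb_Rbar_ge (m := m) Hm); rewrite E.
Qed.

Lemma Glb_Rbar_le_approx (S1 S2 : R -> Prop) :
  (forall x, S1 x -> forall eps, 0 < eps -> exists y, S2 y /\ y <= x + eps) ->
  Rbar_le (Glb_Rbar S2) (Glb_Rbar S1).
Proof.
move=> H; apply: Glb_Rbar_ge => x S1x.
case E: (Glb_Rbar S2) => [g| |] //=.
- apply: Rle_plus_epsilon => eps He; case: (H x S1x eps He) => y [/Glb_Rbar_lb S2y Hy].
  by rewrite E /= in S2y; lra.
- by case: (H x S1x 1 Rlt_0_1) => y [/Glb_Rbar_lb]; rewrite E.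
Qed.

Lemma Rbar_finite_between (x : Rbar) (c : R) :
  Rbar_le 0 x -> Rbar_le x c -> exists r, x = Finite r /\ r <= c.
Proof. by case: x => [r| |] //= _ H; exists r. Qed.

Lemma inv_succ_pos n : 0 < / (INR n + 1).
Proof. by apply: Rinv_0_lt_compat; have := pos_INR n; lra. Qed.

Lemma inv_succ_le m n : (m <= n)%coq_nat -> / (INR n + 1) <= / (INR m + 1).
Proof.
move=> Hmn; apply: Rinv_le_contravar; first by have := pos_INR m; lra.
by have := le_INR _ _ Hmn; lra.
Qed.

Lemma inv_succ_small eps : 0 < eps ->
  exists N, forall n, (N <= n)%coq_nat -> / (INR n + 1) < eps.
Proof.
move=> He; case: (archimed_cor1 eps He) => N [HN HN0]; exists N => n Hn.
apply: Rle_lt_trans HN; apply: Rinv_le_contravar; first by apply: lt_0_INR.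
by have := le_INR _ _ Hn; lra.
Qed.

Lemma le_of_le_inv_succ_often t L c : 0 < c ->
  (forall N, exists n, (N <= n)%coq_nat /\ t <= L + c * / (INR n + 1)) -> t <= L.
Proof.
move=> Hc H; apply: Rnot_lt_le => Hlt.
have [N HN] := inv_succ_small (Rdiv_lt_0_compat _ _ (Rgt_minus _ _ Hlt) Hc).
case: (H N) => n [/HN Hn Ht].
have : c * / (INR n + 1) < t - L.
  by replace (t - L) with (c * ((t - L) / c)) by (field; lra); apply: Rmult_lt_compat_l.
lra.
Qed.

Lemma bigmax_R_ge (I : finType) (f : I -> R) j : f j <= \big[Rmax/0]_(i : I) f i.
Proof.
rewrite unlock; move: (mem_index_enum j); elim: (index_enum I) => [|a s IH] //=.
rewrite in_cons => /orP [/eqP <-|/IH]; first exact: Rmax_l.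
by move=> H; apply: Rle_trans H (Rmax_r _ _).
Qed.

Lemma bigmax_R_le (I : finType) (f : I -> R) c :
  0 <= c -> (forall i, f i <= c) -> \big[Rmax/0]_(i : I) f i <= c.
Proof. by move=> Hc H; apply: (big_ind (fun x => x <= c)) => // x y; apply: Rmax_lub. Qed.

Lemma finite_pos_lb (I : finType) (f : I -> R) :
  (forall i, 0 < f i) -> exists m, 0 < m /\ forall i, m <= f i.
Proof.
move=> Hf; suff [m [Hm Hle]] : exists m, 0 < m /\ forall i, i \in index_enum I -> m <= f i.
  by exists m; split => // i; apply: Hle; rewrite mem_index_enum.
elim: (index_enum I) => [|a s [m [Hm Hle]]]; first by exists 1; split => //; lra.
exists (Rmin m (f a)); split; first exact: Rmin_pos.
move=> i; rewrite in_cons => /orP [/eqP ->|/Hle]; first exact: Rmin_r.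
exact: Rle_trans (Rmin_l _ _).
Qed.

Lemma finite_valued_extract (F : finType) (f : nat -> F) :
  exists c chi, (forall m, (m <= chi m)%coq_nat) /\ forall m, f (chi m) = c.
Proof.
suff [c Hc] : exists c, forall M, exists n, (M <= n)%coq_nat /\ f n = c.
  by case: (functional_choice _ Hc) => chi Hchi; exists c, chi; split => m; case: (Hchi m).
(* Otherwise each value has a last occurrence, and beyond all of them [f] has no value. *)
apply: NNPP => Hn.
have H : forall c, exists M, forall n, (M <= n)%coq_nat -> f n <> c.
  move=> c; apply: NNPP => H1; apply: Hn; exists c => M; apply: NNPP => H2; apply: H1.
  by exists M => n Hn' Hfn; apply: H2; exists n.
case: (functional_choice _ H) => Mf HM.
apply: (HM (f (\max_(c : F) Mf c)%N) (\max_(c : F) Mf c)%N) => //.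
by apply/leP; apply: leq_bigmax_cond.
Qed.

Lemma bounded_extract_cvg (u : nat -> R) lo hi : (forall n, lo <= u n <= hi) ->
  exists chi l, (forall m, (m <= chi m)%coq_nat) /\ lo <= l <= hi /\
    forall eps, 0 < eps -> exists N, forall n, (N <= n)%coq_nat -> Rabs (u (chi n) - l) < eps.
Proof.
(* Extract towards the limsup, which is finite. *)
move=> Hb; case: (ex_LimSup_seq u) => [[l| |] Hl] /=.
- have H : forall m, exists n, (m <= n)%coq_nat /\ Rabs (u n - l) < / (INR m + 1).
    move=> m; case: (Hl (mkposreal _ (inv_succ_pos m))) => /= Hinf [N HN].
    case: (Hinf (Nat.max m N)) => n [Hn1 Hn2]; exists n; split; first lia.
    by have := HN n ltac:(lia); move=> Hn3; apply: Rabs_def1; lra.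
  case: (functional_choice _ H) => chi Hchi; exists chi, l.
  split; first by move=> m; case: (Hchi m).
  split; last first.
    move=> eps He; case: (inv_succ_small He) => N HN; exists N => n Hn.
    by case: (Hchi n) => _ H2; apply: Rlt_trans H2 (HN n Hn).
  split; apply: Rnot_lt_le => Hlt.
  + have Hp : 0 < lo - l by lra.
    case: (Hl (mkposreal _ Hp)) => _ [N HN]; have := HN N (le_n N); have := Hb N; simpl; lra.
  + have Hp : 0 < l - hi by lra.
    case: (Hl (mkposreal _ Hp)) => Hinf _; case: (Hinf 0%nat) => n [_ Hn].
    by have := Hb n; simpl in Hn; lra.
- by case: (Hl hi 0%nat) => n [_ Hn]; have := Hb n; lra.
- by case: (Hl lo) => N HN; have := HN N (le_n N); have := Hb N; lra.
Qed.

Definition grid (m l : nat) : R := INR m / (INR l + 1).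

Lemma grid_ge0 m l : 0 <= grid m l.
Proof. by apply: Rdiv_le_0_compat; [apply: pos_INR | have := pos_INR l; lra]. Qed.

Lemma grid_dense t eps : 0 <= t -> 0 < eps -> exists m l, Rabs (t - grid m l) < eps.
Proof.
move=> Ht He; case: (inv_succ_small He) => l /(_ l (le_n l)) Hl.
have Hp : 0 < INR l + 1 by have := pos_INR l; lra.
have Htl : 0 <= t * (INR l + 1) by apply: Rmult_le_pos; lra.
case: (nfloor_ex _ Htl) => m [Hm1 Hm2]; exists m, l; rewrite /grid.
have H1 : INR m / (INR l + 1) <= t.
  by apply: (Rmult_le_reg_r (INR l + 1)) => //; field_simplify; lra.
have H2 : t - / (INR l + 1) < INR m / (INR l + 1).
  by apply: (Rmult_lt_reg_r (INR l + 1)) => //; field_simplify; lra.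
by rewrite Rabs_right; lra.
Qed.

(** * The metric graph *)

Section MetricGraph.
Variables (V E : finType) (src tgt : E -> V) (A : E -> R).
Hypothesis HA : forall e, 0 < A e.
Hypothesis Hconn : connected src tgt.

Local Notation walk := (is_walk src tgt).
Local Notation wlen := (walk_len A).
Local Notation anchor := (anchor src tgt A).
Local Notation PL := (path_length src tgt A).
Local Notation d := (Defs.dist src tgt A).
Local Notation valid := (valid_point A).

Lemma walk_len_ge0 w : 0 <= wlen w.
Proof. by elim: w => [|[e b] w IH] /=; [lra | have := HA e; lra]. Qed.

Lemma walk_cat u w1 v w2 z : walk u w1 v -> walk v w2 z ->
  walk u (w1 ++ w2) z /\ wlen (w1 ++ w2) = wlen w1 + wlen w2.
Proof.
elim: w1 u => [|[e b] w1 IH] u /=; first by move=> -> H; split => //; lra.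
by move=> [H1 H2] H3; case: (IH _ H2 H3) => H4 H5; split => //; lra.
Qed.

Definition rev_walk (w : list (E * bool)) := rev (map (fun eb => (eb.1, ~~ eb.2)) w).

Lemma walk_rev u w v : walk u w v -> walk v (rev_walk w) u /\ wlen (rev_walk w) = wlen w.
Proof.
elim: w u => [|[e b] w IH] u /=; first by move=> ->.
move=> [Hu /IH [Hw Hl]]; rewrite /rev_walk map_cons rev_cons -cats1 -/(rev_walk w).
have Heb : walk (if b then tgt e else src e) [:: (e, ~~ b)] u by case: b Hu {Hw} => /= <-.
by case: (walk_cat Hw Heb) => H ->; split => //=; rewrite Hl; lra.
Qed.

Lemma anchor_ex x : exists a o, anchor x a o.
Proof. by case: x => [v|e s] /=; [exists v, 0 | exists (src e), s; left]. Qed.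

Lemma anchor_ge0 x a o : valid x -> anchor x a o -> 0 <= o.
Proof. by case: x => [v|e s] /=; [move=> _ [_ ->]; lra | move=> Hs [[_ ->]|[_ ->]]; lra]. Qed.

Lemma anchors_walk y b ob c oc : valid y -> anchor y b ob -> anchor y c oc ->
  exists w, walk b w c /\ wlen w <= ob + oc.
Proof.
case: y => [v|e s] /=.
- by move=> _ [-> ->] [-> ->]; exists nil; split => //=; lra.
- move=> Hs [[-> ->]|[-> ->]] [[-> ->]|[-> ->]].
  + by exists nil; split => //=; lra.
  + by exists [:: (e, true)]; split => //=; lra.
  + by exists [:: (e, false)]; split => //=; lra.
  + by exists nil; split => //=; lra.
Qed.

Lemma path_length_ex x y : exists r, PL x y r.
Proof.
case: (anchor_ex x) => a [oa Ha]; case: (anchor_ex y) => b [ob Hb].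
by case: (Hconn a b) => w Hw; exists (oa + wlen w + ob); right; exists a, oa, b, ob, w.
Qed.

Lemma path_length_ge0 x y r : valid x -> valid y -> PL x y r -> 0 <= r.
Proof.
move=> Hx Hy [[e [s [s' [_ [_ ->]]]]]|[a [oa [b [ob [w [Ha [Hb [_ ->]]]]]]]]].
- exact: Rabs_pos.
- by have := anchor_ge0 Hx Ha; have := anchor_ge0 Hy Hb; have := walk_len_ge0 w; lra.
Qed.

Lemma path_length_sym x y r : PL x y r -> PL y x r.
Proof.
move=> [[e [s [s' [-> [-> ->]]]]]|[a [oa [b [ob [w [Ha [Hb [/walk_rev [Hw Hl] ->]]]]]]]]].
- by left; exists e, s', s; rewrite Rabs_minus_sym.
- by right; exists b, ob, a, oa, (rev_walk w); rewrite Hl; repeat split => //; lra.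
Qed.

Lemma path_length_cat x y z r1 r2 : valid y -> PL x y r1 -> PL y z r2 ->
  exists r, PL x z r /\ r <= r1 + r2.
Proof.
move=> Hy [[e [s [s' [-> [-> ->]]]]]|[a [oa [b [ob [w [Ha [Hb [Hw ->]]]]]]]]].
- move=> [[e' [t [t' [[<- <-] [-> ->]]]]]|[a [oa [b [ob [w [Ha [Hb [Hw ->]]]]]]]]].
  + exists (Rabs (s - t')); split; first by left; exists e, s, t'.
    by have := Rabs_triang (s - s') (s' - t'); replace (s - s' + (s' - t')) with (s - t') by ring.
  + have := Rle_abs (s - s'); have := Rle_abs (s' - s); rewrite Rabs_minus_sym.
    case: Ha => [[Ea ->]|[Ea ->]] H1 H2; subst a.
    * exists (s + wlen w + ob); split; last lra.
      by right; exists (src e), s, b, ob, w; split => //; left.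
    * exists ((A e - s) + wlen w + ob); split; last lra.
      by right; exists (tgt e), (A e - s), b, ob, w; split => //; right.
- move=> [[e' [t [t' [Hye [-> ->]]]]]|[c [oc [f [of_ [w' [Hc [Hf [Hw' ->]]]]]]]]].
  + subst y; have := Rle_abs (t - t'); have := Rle_abs (t' - t); rewrite Rabs_minus_sym.
    case: Hb => [[Eb ->]|[Eb ->]] H1 H2; subst b.
    * exists (oa + wlen w + t'); split; last lra.
      by right; exists a, oa, (src e'), t', w; repeat split => //; left.
    * exists (oa + wlen w + (A e' - t')); split; last lra.
      by right; exists a, oa, (tgt e'), (A e' - t'), w; repeat split => //; right.
  + case: (anchors_walk Hy Hb Hc) => w0 [Hw0 Hl0].
    case: (walk_cat Hw Hw0) => Hw1 Hl1; case: (walk_cat Hw1 Hw') => Hw2 Hl2.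
    exists (oa + wlen ((w ++ w0) ++ w') + of_); split.
    * by right; exists a, oa, f, of_, ((w ++ w0) ++ w').
    * by rewrite Hl2 Hl1; lra.
Qed.

Lemma dist_glb x y : valid x -> valid y ->
  0 <= d x y /\ (forall r, PL x y r -> d x y <= r) /\
  (forall m, (forall r, PL x y r -> m <= r) -> m <= d x y) /\
  (forall eps, 0 < eps -> exists r, PL x y r /\ r < d x y + eps).
Proof.
move=> Hx Hy; case: (path_length_ex x y) => r0 H0.
case: (Glb_Rbar_finite H0 (fun r Hr => path_length_ge0 Hx Hy Hr)) => g [Hg [H1 [H2 H3]]].
rewrite /Defs.dist Hg /=; repeat split => //.
by apply: H2 => r; apply: path_length_ge0.
Qed.

Lemma dist_ge0 x y : valid x -> valid y -> 0 <= d x y.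
Proof. by move=> Hx Hy; case: (dist_glb Hx Hy). Qed.

Lemma dist_le_path x y r : valid x -> valid y -> PL x y r -> d x y <= r.
Proof. by move=> Hx Hy; case: (dist_glb Hx Hy) => _ [H _]; apply: H. Qed.

Lemma dist_sym x y : d x y = d y x.
Proof.
by rewrite /Defs.dist (Glb_Rbar_eqset (PL x y) (PL y x)) //; split; apply: path_length_sym.
Qed.

Lemma dist_triangle x y z : valid x -> valid y -> valid z -> d x z <= d x y + d y z.
Proof.
move=> Hx Hy Hz; apply: Rle_plus_epsilon => eps He.
case: (dist_glb Hx Hy) => _ [_ [_ /(_ (eps / 2) ltac:(lra)) [r1 [P1 L1]]]].
case: (dist_glb Hy Hz) => _ [_ [_ /(_ (eps / 2) ltac:(lra)) [r2 [P2 L2]]]].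
case: (path_length_cat Hy P1 P2) => r [P L].
by have := dist_le_path Hx Hz P; lra.
Qed.

Lemma dist_self x : valid x -> d x x = 0.
Proof.
move=> Hx; apply: Rle_antisym; last exact: dist_ge0.
apply: dist_le_path => //; case: x Hx => [v|e s] Hx.
- by right; exists v, 0, v, 0, nil; repeat split => //=; lra.
- by left; exists e, s, s; rewrite Rminus_diag Rabs_R0.
Qed.

(* A path from [x <> v] to [v] is at least as long as the shortest edge, or as
   the distance from [x] to the ends of its edge. *)
Lemma dist_node_eq x v : valid x -> d x (PV E v) <= 0 -> x = PV E v.
Proof.
move=> Hx Hd; apply: NNPP => Hne.
suff [m [Hm Hle]] : exists m, 0 < m /\ forall r, PL x (PV E v) r -> m <= r.
  by case: (dist_glb Hx (I : valid (PV E v))) => _ [_ [/(_ m Hle) ? _]]; lra.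
case: (finite_pos_lb HA) => mA [HmA HmAle].
case: x Hx Hne {Hd} => [w|e s] Hx Hne.
- exists mA; split => // r [[e [s [s' [//]]]]|[a [oa [b [ob [wk [[-> ->] [[-> ->] [Hw ->]]]]]]]]].
  case: wk Hw => [|[e0 b0] wk] /= Hw; first by case: Hne; rewrite Hw.
  by have := walk_len_ge0 wk; have := HmAle e0; lra.
- exists (Rmin s (A e - s)); split; first by simpl in Hx; apply: Rmin_pos; lra.
  move=> r [[e' [t [t' [_ [//]]]]]|[a [oa [b [ob [wk [Ha [[-> ->] [Hw ->]]]]]]]]].
  have := walk_len_ge0 wk; have := Rmin_l s (A e - s); have := Rmin_r s (A e - s).
  by case: Ha => [[_ ->]|[_ ->]]; lra.
Qed.

Definition edge_point (e : E) (u : R) : Point V E :=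
  if Rle_dec u 0 then PV E (src e) else if Rle_dec (A e) u then PV E (tgt e) else PE V e u.

Lemma edge_point_valid e u : valid (edge_point e u).
Proof. by rewrite /edge_point; case: Rle_dec => // H1; case: Rle_dec => // H2 /=; lra. Qed.

Lemma edge_point_inner e u : 0 < u < A e -> edge_point e u = PE V e u.
Proof.
by move=> Hu; rewrite /edge_point; case: Rle_dec => H1; [lra | case: Rle_dec => // H2; lra].
Qed.

Lemma edge_point_0 e : edge_point e 0 = PV E (src e).
Proof. by rewrite /edge_point; case: Rle_dec => // H; lra. Qed.

Lemma edge_point_A e : edge_point e (A e) = PV E (tgt e).
Proof.
by have := HA e; rewrite /edge_point; case: Rle_dec => H1 H2; [lra | case: Rle_dec => // H3; lra].
Qed.

Lemma edge_point_cases e u : (u <= 0 /\ edge_point e u = PV E (src e)) \/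
  (0 < u /\ A e <= u /\ edge_point e u = PV E (tgt e)) \/
  (0 < u < A e /\ edge_point e u = PE V e u).
Proof.
rewrite /edge_point; case: Rle_dec => H1; first by left.
by case: Rle_dec => H2; [right; left | right; right]; repeat split => //; lra.
Qed.

Lemma edge_point_dist e u u' : 0 <= u <= A e -> 0 <= u' <= A e ->
  d (edge_point e u) (edge_point e u') <= Rabs (u - u').
Proof.
move=> Hu Hu'; have He := HA e.
suff [r [Hr Hle]] : exists r, PL (edge_point e u) (edge_point e u') r /\ r <= Rabs (u - u').
  by apply: Rle_trans (dist_le_path (edge_point_valid _ _) (edge_point_valid _ _) Hr) Hle.
have Ha := Rabs_pos (u - u'); have Hb := Rle_abs (u - u'); have Hc := Rle_abs (u' - u).
rewrite Rabs_minus_sym in Hc.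
case: (edge_point_cases e u) => [[H1 ->]|[[H1 [H2 ->]]|[H1 ->]]];
  case: (edge_point_cases e u') => [[H3 ->]|[[H3 [H4 ->]]|[H3 ->]]].
- exists 0; split; last lra.
  by right; exists (src e), 0, (src e), 0, nil; repeat split => //=; lra.
- exists (A e); split; last lra.
  by right; exists (src e), 0, (tgt e), 0, [:: (e, true)]; repeat split => //=; lra.
- exists u'; split; last lra.
  by right; exists (src e), 0, (src e), u', nil; repeat split => //=; [left | lra].
- exists (A e); split; last lra.
  by right; exists (tgt e), 0, (src e), 0, [:: (e, false)]; repeat split => //=; lra.
- exists 0; split; last lra.
  by right; exists (tgt e), 0, (tgt e), 0, nil; repeat split => //=; lra.
- exists (A e - u'); split; last lra.
  by right; exists (tgt e), 0, (tgt e), (A e - u'), nil; repeat split => //=; [right | lra].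
- exists u; split; last lra.
  by right; exists (src e), u, (src e), 0, nil; repeat split => //=; [left | lra].
- exists (A e - u); split; last lra.
  by right; exists (tgt e), (A e - u), (tgt e), 0, nil; repeat split => //=; [right | lra].
- by exists (Rabs (u - u')); split; [left; exists e, u, u' | lra].
Qed.

Definition converges (x : nat -> Point V E) (l : Point V E) :=
  forall eps, 0 < eps -> exists N, forall n, (N <= n)%coq_nat -> d (x n) l < eps.

Lemma converges_extract x l chi : (forall m, (m <= chi m)%coq_nat) ->
  converges x l -> converges (fun m => x (chi m)) l.
Proof.
by move=> Hchi H eps /H [N HN]; exists N => n Hn; apply: HN; have := Hchi n; lia.
Qed.

Definition cell (x : Point V E) : V + E :=
  match x with PV v => inl v | PE e _ => inr e end.

(* Sequential compactness of |G|: extract a subsequence staying in one cell,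
   then use Bolzano-Weierstrass on the position along the edge. *)
Lemma extract_converges (x : nat -> Point V E) : (forall n, valid (x n)) ->
  exists chi l, (forall m, (m <= chi m)%coq_nat) /\ valid l /\ converges (fun m => x (chi m)) l.
Proof.
move=> Hx; case: (finite_valued_extract (fun n => cell (x n))) => c [chi1 [Hchi1 Hc]].
case: c Hc => [v|e] Hc.
- exists chi1, (PV E v); split => //; split => // eps He; exists 0%nat => n _.
  have := Hc n; have := dist_self (Hx (chi1 n)).
  by case: (x (chi1 n)) => [w|f s] //= H0 [Hw]; rewrite -Hw H0; lra.
- pose s n := if x (chi1 n) is PE _ s then s else 0.
  have Hs : forall n, x (chi1 n) = edge_point e (s n) /\ 0 <= s n <= A e.
    move=> n; have := Hc n; have := Hx (chi1 n); rewrite /s.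
    case: (x (chi1 n)) => [w|f t] //= Ht [Hf]; subst f.
    by rewrite edge_point_inner //; split => //; lra.
  case: (@bounded_extract_cvg s 0 (A e)) => [n|chi2 [l [Hchi2 [Hl Hcvg]]]]; first by case: (Hs n).
  exists (fun m => chi1 (chi2 m)), (edge_point e l); split.
    by move=> m; have := Hchi1 (chi2 m); have := Hchi2 m; lia.
  split; first exact: edge_point_valid.
  move=> eps /Hcvg [N HN]; exists N => n /HN Hn; case: (Hs (chi2 n)) => -> Hsn.
  exact: Rle_lt_trans (edge_point_dist _ _) Hn.
Qed.

Lemma cauchy_converges (x : nat -> Point V E) : (forall n, valid (x n)) ->
  (forall eps, 0 < eps -> exists N, forall n m, (N <= n)%coq_nat -> (N <= m)%coq_nat ->
     d (x n) (x m) < eps) ->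
  exists l, valid l /\ converges x l.
Proof.
move=> Hx Hc; case: (extract_converges Hx) => chi [l [Hchi [Hl Hcvg]]].
exists l; split => // eps He.
case: (Hc _ (ltac:(lra) : 0 < eps / 2)) => N1 HN1.
case: (Hcvg _ (ltac:(lra) : 0 < eps / 2)) => N2 HN2.
exists N1 => n Hn; pose m := Nat.max n N2.
have H1 := HN2 m ltac:(lia); have H2 := HN1 n (chi m) Hn ltac:(have := Hchi m; lia).
by have := dist_triangle (Hx n) (Hx (chi m)) Hl; lra.
Qed.

Fixpoint diagonal_extraction (Sel : (nat -> Point V E) -> nat -> nat)
    (X : nat -> nat -> Point V E) (j : nat) : nat -> nat :=
  match j with
  | O => Sel (fun m => X m O)
  | S j' => fun m => diagonal_extraction Sel X j'
              (Sel (fun m' => X (diagonal_extraction Sel X j' m') (S j')) m)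
  end.

(* Cantor's diagonal argument, with [Sel] choosing a convergent extraction. *)
Lemma diagonal_extract (X : nat -> nat -> Point V E) : (forall n j, valid (X n j)) ->
  exists chi, (forall n, (n <= chi n)%coq_nat) /\
    forall j, exists l, valid l /\ converges (fun n => X (chi n) j) l.
Proof.
move=> HX.
have Hsel : forall y : nat -> Point V E, exists chi : nat -> nat, (forall n, valid (y n)) ->
    (forall m, (m <= chi m)%coq_nat) /\ exists l, valid l /\ converges (fun m => y (chi m)) l.
  move=> y; case: (classic (forall n, valid (y n))) => Hy.
  - by case: (extract_converges Hy) => chi [l [H1 [H2 H3]]]; exists chi => _; split => //; exists l.
  - by exists (fun m : nat => m).
case: (functional_choice _ Hsel) => Sel HSel.
pose psi := diagonal_extraction Sel X.
have Hpsi_ge : forall j m, (m <= psi j m)%coq_nat.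
  elim=> [|j IH] m /=.
  - by case: (HSel (fun m => X m O)) => // H _; apply: H.
  - case: (HSel (fun m' => X (psi j m') (S j))) => // H _.
    by have := H m; have := IH (Sel (fun m' => X (psi j m') (S j)) m); rewrite /psi /=; lia.
have Hpsi_cvg : forall j, exists l, valid l /\ converges (fun m => X (psi j m) j) l.
  case=> [|j] /=.
  - by case: (HSel (fun m => X m O)) => // _ H.
  - by case: (HSel (fun m' => X (psi j m') (S j))) => // _ H.
have Hpsi_sub : forall j i m, exists q, (m <= q)%coq_nat /\ psi (i + j)%coq_nat m = psi j q.
  move=> j; elim=> [|i IH] m /=; first by exists m.
  case: (IH (Sel (fun m' => X (psi (i + j)%coq_nat m') (S (i + j))) m)) => q [Hq Hq'].
  exists q; split; last exact: Hq'.
  case: (HSel (fun m' => X (psi (i + j)%coq_nat m') (S (i + j)))) => // H _.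
  by have := H m; lia.
exists (fun n => psi n n); split => // j.
case: (Hpsi_cvg j) => l [Hl Hc]; exists l; split => // eps /Hc [N HN].
exists (Nat.max N j) => n Hn; case: (Hpsi_sub j (n - j)%coq_nat n) => q [Hq Hq'].
have -> : psi n n = psi j q by rewrite -Hq'; congr (psi _ n); lia.
by apply: HN; lia.
Qed.

End MetricGraph.

(** * Curves in the metric graph *)

Definition toward (u1 u2 w : R) : R :=
  if Rle_dec u1 u2 then Rmin u2 (u1 + Rmax 0 w) else Rmax u2 (u1 - Rmax 0 w).

Lemma toward_between u1 u2 w : Rmin u1 u2 <= toward u1 u2 w <= Rmax u1 u2.
Proof. by rewrite /toward /Rmin /Rmax; repeat destruct Rle_dec; simpl; lra. Qed.

Lemma toward_lip u1 u2 w w' : Rabs (toward u1 u2 w - toward u1 u2 w') <= Rabs (w - w').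
Proof. by rewrite /toward /Rmin /Rmax; repeat destruct Rle_dec; simpl; split_Rabs; lra. Qed.

Lemma toward_0 u1 u2 : toward u1 u2 0 = u1.
Proof. by rewrite /toward /Rmin /Rmax; repeat destruct Rle_dec; simpl; lra. Qed.

Lemma toward_end u1 u2 w : Rabs (u2 - u1) <= w -> toward u1 u2 w = u2.
Proof. by rewrite /toward /Rmin /Rmax; repeat destruct Rle_dec; simpl; split_Rabs; lra. Qed.

Section Curves.
Variables (V E : finType) (src tgt : E -> V) (A : E -> R).
Hypothesis HA : forall e, 0 < A e.
Hypothesis Hconn : connected src tgt.

Local Notation d := (Defs.dist src tgt A).
Local Notation valid := (valid_point A).
Local Notation edge_point := (edge_point src tgt A).

Definition splice (a : R) (f g : R -> Point V E) (u : R) : Point V E :=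
  if Rle_dec u a then f u else g u.

Lemma splice_lipschitz a f g :
  (forall u, u <= a -> valid (f u)) -> (forall u, a <= u -> valid (g u)) -> f a = g a ->
  (forall u u', u <= a -> u' <= a -> d (f u) (f u') <= Rabs (u - u')) ->
  (forall u u', a <= u -> a <= u' -> d (g u) (g u') <= Rabs (u - u')) ->
  forall u u', d (splice a f g u) (splice a f g u') <= Rabs (u - u').
Proof.
move=> Vf Vg Hfg Lf Lg u u'.
wlog Huu : u u' / u <= u'.
  move=> Hw; case: (Rle_dec u u') => H; first exact: Hw.
  by rewrite dist_sym Rabs_minus_sym; apply: Hw; lra.
rewrite /splice; case: Rle_dec => Hu; case: Rle_dec => Hu' /=; try lra.
- exact: Lf.
- have := dist_triangle HA Hconn (Vf u Hu) (Vf a (Rle_refl a)) (Vg u' ltac:(lra)).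
  rewrite Hfg; have := Lf u a Hu (Rle_refl a); rewrite Hfg.
  have := Lg a u' (Rle_refl a) ltac:(lra).
  have : Rabs (u - a) + Rabs (a - u') = Rabs (u - u') by split_Rabs; lra.
  lra.
- by apply: Lg; lra.
Qed.

Definition curve (x y : Point V E) (l : R) (g : R -> Point V E) :=
  0 <= l /\ (forall u, valid (g u)) /\ (forall u u', d (g u) (g u') <= Rabs (u - u')) /\
  g 0 = x /\ forall u, l <= u -> g u = y.

Lemma curve_weaken x y l c g : l <= c -> curve x y l g -> curve x y c g.
Proof.
move=> Hlc [Hl [Hv [Hlip [H0 Hend]]]]; do 4 (split; first by [lra |]).
by move=> u Hu; apply: Hend; lra.
Qed.

Lemma const_curve x : valid x -> curve x x 0 (fun _ => x).
Proof.
move=> Hx; repeat split => //; first lra.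
by move=> u u'; rewrite (dist_self HA Hconn Hx); apply: Rabs_pos.
Qed.

Lemma segment_curve e u1 u2 : 0 <= u1 <= A e -> 0 <= u2 <= A e ->
  curve (edge_point e u1) (edge_point e u2) (Rabs (u2 - u1))
        (fun w => edge_point e (toward u1 u2 w)).
Proof.
move=> H1 H2; repeat split.
- exact: Rabs_pos.
- by move=> w; apply: edge_point_valid.
- move=> w w'; apply: Rle_trans _ (toward_lip u1 u2 w w').
  have := toward_between u1 u2 w; have := toward_between u1 u2 w'.
  have : 0 <= Rmin u1 u2 by apply: Rmin_glb; lra.
  have : Rmax u1 u2 <= A e by apply: Rmax_lub; lra.
  by move=> ? ? ? ?; apply: (edge_point_dist HA Hconn); lra.
- by rewrite toward_0.
- by move=> w /toward_end ->.
Qed.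

Lemma concat_curve x y z a b g1 g2 : curve x y a g1 -> curve y z b g2 ->
  curve x z (a + b) (splice a g1 (fun u => g2 (u - a))).
Proof.
move=> [Ha [V1 [L1 [S1 E1]]]] [Hb [V2 [L2 [S2 E2]]]].
have Hy : g1 a = g2 (a - a) by rewrite Rminus_diag E1 ?S2 //; lra.
split; first lra.
split; first by move=> u; rewrite /splice; case: Rle_dec => _ /=; [apply: V1 | apply: V2].
split.
  apply: splice_lipschitz => [u _|u _|//|u u' _ _|u u' _ _]; [apply: V1 | apply: V2 | apply: L1 |].
  by replace (u - u') with (u - a - (u' - a)) by ring.
split; first by rewrite /splice; case: Rle_dec => H /=; [exact: S1 | lra].
move=> u Hu; rewrite /splice; case: Rle_dec => H /=; last by apply: E2; lra.
have -> : u = a by lra.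
by rewrite Hy E2 //; lra.
Qed.

Lemma edge_curves e : (exists g, curve (PV E (src e)) (PV E (tgt e)) (A e) g) /\
                      (exists g, curve (PV E (tgt e)) (PV E (src e)) (A e) g).
Proof.
have He := HA e.
have H1 := @segment_curve e 0 (A e) ltac:(lra) ltac:(lra).
have H2 := @segment_curve e (A e) 0 ltac:(lra) ltac:(lra).
rewrite edge_point_0 (edge_point_A src tgt HA) Rminus_0_r Rabs_right in H1; last lra.
rewrite edge_point_0 (edge_point_A src tgt HA) Rminus_0_l Rabs_Ropp Rabs_right in H2; last lra.
by split; eexists; eassumption.
Qed.

Lemma walk_curve u w v : is_walk src tgt u w v ->
  exists g, curve (PV E u) (PV E v) (walk_len A w) g.
Proof.
elim: w u => [|[e b] w IH] u /=; first by move=> ->; exists (fun _ => PV E v); apply: const_curve.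
move=> [<- /IH [g Hg]]; case: (edge_curves e) => [[g1 H1] [g2 H2]].
by case: b Hg => Hg; eexists; [exact: concat_curve H1 Hg | exact: concat_curve H2 Hg].
Qed.

Lemma anchor_curves x a o : valid x -> anchor src tgt A x a o ->
  (exists g, curve x (PV E a) o g) /\ (exists g, curve (PV E a) x o g).
Proof.
case: x => [v|e s] /=.
  by move=> _ [-> ->]; split; exists (fun _ => PV E v); apply: const_curve.
move=> Hs [[-> ->]|[-> ->]].
- have H1 := @segment_curve e s 0 ltac:(lra) ltac:(lra).
  have H2 := @segment_curve e 0 s ltac:(lra) ltac:(lra).
  rewrite edge_point_0 edge_point_inner // Rminus_0_l Rabs_Ropp Rabs_right in H1; last lra.
  rewrite edge_point_0 edge_point_inner // Rminus_0_r Rabs_right in H2; last lra.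
  by split; eexists; eassumption.
- have H1 := @segment_curve e s (A e) ltac:(lra) ltac:(lra).
  have H2 := @segment_curve e (A e) s ltac:(lra) ltac:(lra).
  rewrite (edge_point_A src tgt HA) edge_point_inner // Rabs_right in H1; last lra.
  rewrite (edge_point_A src tgt HA) edge_point_inner // Rabs_minus_sym Rabs_right in H2; last lra.
  by split; eexists; eassumption.
Qed.

Lemma path_length_curve x y r : valid x -> valid y -> path_length src tgt A x y r ->
  exists g, curve x y r g.
Proof.
move=> Hx Hy [[e [s [s' [Ex [Ey ->]]]]]|[a [oa [b [ob [w [Ha [Hb [Hw ->]]]]]]]]].
- subst x y; have := @segment_curve e s s'; rewrite !edge_point_inner // Rabs_minus_sym.
  by simpl in Hx, Hy; move=> H; eexists; apply: H; lra.
- case: (anchor_curves Hx Ha) => [[g1 H1] _]; case: (anchor_curves Hy Hb) => [_ [g3 H3]].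
  case: (walk_curve Hw) => g2 H2.
  by eexists; exact: concat_curve (concat_curve H1 H2) H3.
Qed.

Lemma dist_curve x y c : valid x -> valid y -> d x y < c -> exists g, curve x y c g.
Proof.
move=> Hx Hy Hc; case: (dist_glb HA Hconn Hx Hy) => _ [_ [_ /(_ (c - d x y)) []]]; first lra.
move=> r [Hr Hrc]; case: (path_length_curve Hx Hy Hr) => g Hg.
by exists g; apply: curve_weaken Hg; lra.
Qed.
End Curves.

(** * Latencies and the objectives J_T *)

Section Strategies.
Variables (V E : finType) (src tgt : E -> V) (A : E -> R) (phi : V -> R) (k : nat).
Hypothesis Hphi : forall v, 0 < phi v.

Local Notation d := (Defs.dist src tgt A).
Local Notation valid := (valid_point A).
Local Notation feasible := (feasible src tgt A (k:=k)).
Local Notation M := (weighted_max_latency phi (k:=k)).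
Local Notation Strategy := (Strategy V E k).

Lemma feasibleP (pi : Strategy) :
  feasible pi <-> (forall t i, 0 <= t -> valid (pi t i)) /\
    forall t t' i, 0 <= t -> 0 <= t' -> d (pi t i) (pi t' i) <= Rabs (t - t').
Proof.
split=> [[Hv Hl]|[Hv Hl]]; split.
- by move=> t i Ht; apply: Hv.
- by move=> t t' i Ht Ht'; apply: Rle_trans (Hl t t' Ht Ht'); apply: bigmax_R_ge.
- by move=> t Ht i; apply: Hv.
- by move=> t t' Ht Ht'; apply: bigmax_R_le; [apply: Rabs_pos | move=> i; apply: Hl].
Qed.

Lemma last_visit_sup (pi : Strategy) v t t0 : visit_times pi v t t0 ->
  (forall t', visit_times pi v t t' -> t' <= last_visit pi v t) /\
  forall eps, 0 < eps -> exists t', visit_times pi v t t' /\ last_visit pi v t - eps < t'.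
Proof.
move=> H0; have Hb : forall t', visit_times pi v t t' -> t' <= t by move=> t' [[_ ?] _].
by case: (Lub_Rbar_finite H0 Hb) => g [Hg Hspec]; rewrite /last_visit Hg.
Qed.

Lemma visit_le_last_visit (pi : Strategy) v t t' :
  visit_times pi v t t' -> t' <= last_visit pi v t.
Proof. by move=> H; case: (last_visit_sup H) => Hle _; apply: Hle. Qed.

Lemma last_visit_approx (pi : Strategy) v t t0 eps : visit_times pi v t t0 -> 0 < eps ->
  exists t', visit_times pi v t t' /\ last_visit pi v t - eps < t'.
Proof. by move=> H; case: (last_visit_sup H) => _; apply. Qed.

Lemma last_visit_never (pi : Strategy) v t :
  (forall t', ~ visit_times pi v t t') -> last_visit pi v t = 0.
Proof. by move=> H; rewrite /last_visit Lub_Rbar_empty. Qed.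

Lemma last_visit_bounds (pi : Strategy) v t : 0 <= t -> 0 <= last_visit pi v t <= t.
Proof.
move=> Ht; case: (classic (exists t0, visit_times pi v t t0)) => [[t0 H0]|Hn].
- have := visit_le_last_visit H0; have [[Ht0 _] _] := H0; move=> Hle; split; first lra.
  apply: Rle_plus_epsilon => eps He; case: (last_visit_approx H0 He) => t' [[[_ ?] _] ?].
  lra.
- by rewrite last_visit_never; [lra | move=> t' H; apply: Hn; exists t'].
Qed.

Lemma latency_ge0 (pi : Strategy) v t : 0 <= t -> 0 <= latency pi v t.
Proof. by move=> /(last_visit_bounds pi v); rewrite /latency; lra. Qed.

Lemma latency_le_time (pi : Strategy) v t : 0 <= t -> latency pi v t <= t.
Proof. by move=> /(last_visit_bounds pi v); rewrite /latency; lra. Qed.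

Lemma latency_le_of_visit (pi : Strategy) v t tau :
  visit_times pi v t tau -> latency pi v t <= t - tau.
Proof. by move=> /visit_le_last_visit; rewrite /latency; lra. Qed.

Lemma recent_visit (pi : Strategy) v t L eps : 0 <= t -> latency pi v t <= L -> 0 < eps ->
  t <= L \/ exists r tau, 0 <= tau <= t /\ pi tau r = PV E v /\ t - L - eps < tau.
Proof.
rewrite /latency => Ht HL He.
case: (classic (exists t0, visit_times pi v t t0)) => [[t0 H0]|Hn].
- case: (last_visit_approx H0 He) => tau [[Htau [r Hr]] Hlt].
  by right; exists r, tau; split => //; split => //; lra.
- by left; rewrite last_visit_never in HL; [lra | move=> t' H; apply: Hn; exists t'].
Qed.

Lemma last_visit_transfer (pi pi' : Strategy) v t t' a : 0 <= t' ->
  (forall tau, visit_times pi v t tau -> 0 <= tau + a -> visit_times pi' v t' (tau + a)) ->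
  a <= 0 \/ 0 < last_visit pi v t ->
  last_visit pi v t + a <= last_visit pi' v t'.
Proof.
move=> Ht' Hvis Ha; have := last_visit_bounds pi' v Ht'.
case: (classic (exists t0, visit_times pi v t t0)) => [[t0 H0]|Hn].
- move=> Hb; apply: Rle_plus_epsilon => eps He.
  case: (last_visit_approx H0 He) => tau [Htau Hlt].
  case: (Rle_dec 0 (tau + a)) => Hpos; last lra.
  by have := visit_le_last_visit (Hvis _ Htau Hpos); lra.
- by rewrite last_visit_never in Ha *; [lra | move=> t0 H; apply: Hn; exists t0].
Qed.

Lemma weighted_latency_le_max (pi : Strategy) v t : phi v * latency pi v t <= M pi t.
Proof. exact: (bigmax_R_ge (fun v => phi v * latency pi v t)). Qed.

Lemma max_latency_le (pi : Strategy) t c : 0 <= c ->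
  (forall v, phi v * latency pi v t <= c) -> M pi t <= c.
Proof. exact: bigmax_R_le. Qed.

Lemma max_latency_ge0 (pi : Strategy) t : 0 <= t -> 0 <= M pi t.
Proof.
move=> Ht; apply: (big_ind (fun x => 0 <= x)); [lra | | ].
- by move=> x y Hx Hy; apply: Rle_trans Hx (Rmax_l _ _).
- by move=> v _; apply: Rmult_le_pos; [apply: Rlt_le | apply: latency_ge0].
Qed.

Lemma weighted_latency_le (pi : Strategy) v t j :
  latency pi v t <= j / phi v -> phi v * latency pi v t <= j.
Proof.
move=> Hl; have Hv := Hphi v; have := Rmult_le_compat_l _ _ _ (Rlt_le _ _ Hv) Hl.
by replace (phi v * (j / phi v)) with j by (field; lra).
Qed.

Lemma latency_le_of_max (pi : Strategy) v t j : M pi t <= j -> latency pi v t <= j / phi v.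
Proof.
move=> Hj; have Hv := Hphi v; apply: (Rmult_le_reg_l (phi v)) => //.
replace (phi v * (j / phi v)) with j by (field; lra).
exact: Rle_trans (weighted_latency_le_max pi v t) Hj.
Qed.

End Strategies.

Section Objective.
Variables (V E : finType) (src tgt : E -> V) (A : E -> R) (phi : V -> R) (k : nat).
Hypothesis Hphi : forall v, 0 < phi v.

Local Notation feasible := (feasible src tgt A (k:=k)).
Local Notation M := (weighted_max_latency phi (k:=k)).
Local Notation Strategy := (Strategy V E k).
Local Notation J := (J phi (k:=k)).
Local Notation Jstar := (Jstar src tgt A phi k).

Lemma J_fin_ge (pi : Strategy) T t : T <= t -> Rbar_le (M pi t) (J_fin phi pi T).
Proof. by move=> Ht; rewrite /J_fin; apply: Lub_Rbar_ub; exists t. Qed.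

Lemma J_fin_le (pi : Strategy) T c :
  (forall t, T <= t -> M pi t <= c) -> Rbar_le (J_fin phi pi T) c.
Proof. by move=> H; rewrite /J_fin; apply: Lub_Rbar_le => _ [t [Ht ->]]; apply: H. Qed.

Lemma J_fin_ge0 (pi : Strategy) T : 0 <= T -> Rbar_le 0 (J_fin phi pi T).
Proof.
move=> HT; apply: Rbar_le_trans (J_fin_ge pi (Rle_refl T)).
exact: (max_latency_ge0 Hphi).
Qed.

Lemma J_ge0 (pi : Strategy) T : Rbar_le 0 T -> Rbar_le 0 (J T pi).
Proof.
case: T => [T| |] // HT; first exact: J_fin_ge0.
by apply: Glb_Rbar_ge => r [T0 [HT0 Hr]]; have := J_fin_ge0 pi HT0; rewrite -Hr.
Qed.

Lemma J_antitone (pi : Strategy) T1 T2 : Rbar_le 0 T1 -> Rbar_lt T1 T2 ->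
  Rbar_le (J T2 pi) (J T1 pi).
Proof.
case: T1 => [T1| |] //= H1; case: T2 => [T2| |] //= H12.
- by rewrite /J_fin; apply: Lub_Rbar_subset => _ [t [Ht ->]]; exists t; split => //; lra.
- case E1: (J_fin phi pi T1) (J_fin_ge0 pi H1) => [j| |] //= _.
  + by rewrite /Rbar_inf; apply: Glb_Rbar_lb; exists T1.
  + by case: (Rbar_inf _).
Qed.

Lemma Jstar_le_J (pi : Strategy) T : Rbar_le 0 T -> feasible pi -> Rbar_le (Jstar T) (J T pi).
Proof.
move=> HT Hf; case E1: (J T pi) (J_ge0 pi HT) => [j| |] //= _.
- by rewrite /Jstar /Rbar_inf; apply: Glb_Rbar_lb; exists pi.
- by case: (Jstar T).
Qed.

Definition shift_strategy (pi : Strategy) (s : R) : Strategy := fun t => pi (t + s).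

Lemma shift_feasible (pi : Strategy) s : 0 <= s -> feasible pi -> feasible (shift_strategy pi s).
Proof.
move=> Hs /feasibleP [Hv Hl]; apply/feasibleP; split=> [t i Ht|t t' i Ht Ht'].
- by apply: Hv; lra.
- have := Hl (t + s) (t' + s) i ltac:(lra) ltac:(lra).
  by replace (t + s - (t' + s)) with (t - t') by ring.
Qed.

Lemma latency_shift_le (pi : Strategy) s v t : 0 <= s -> 0 <= t ->
  latency (shift_strategy pi s) v t <= latency pi v (t + s).
Proof.
move=> Hs Ht; rewrite /latency.
suff : last_visit pi v (t + s) + - s <= last_visit (shift_strategy pi s) v t by lra.
apply: last_visit_transfer => //; last by left; lra.
move=> tau [[_ Htau] [r Hr]] Hpos; split; first lra.
by exists r; rewrite /shift_strategy; replace (tau + - s + s) with tau by ring.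
Qed.

Lemma J0_shift_le (pi : Strategy) s : 0 <= s ->
  Rbar_le (J (Finite 0) (shift_strategy pi s)) (J_fin phi pi s).
Proof.
move=> Hs; case E1: (J_fin phi pi s) (J_fin_ge0 pi Hs) => [j| |] //= Hj0.
- apply: J_fin_le => t Ht; apply: max_latency_le => // v.
  apply: Rle_trans (Rmult_le_compat_l _ _ _ (Rlt_le _ _ (Hphi v)) (latency_shift_le pi v Hs Ht)) _.
  apply: Rle_trans (weighted_latency_le_max phi pi v (t + s)) _.
  by have := J_fin_ge pi (ltac:(lra) : s <= t + s); rewrite E1.
- by case: (J_fin phi (shift_strategy pi s) 0).
Qed.

Lemma J_le_J0 (pi : Strategy) T : Rbar_le 0 T -> Rbar_le (J T pi) (J (Finite 0) pi).
Proof.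
case: T => [T| |] // HT.
- case: (Rle_lt_or_eq_dec _ _ HT) => [Hlt|<-]; last exact: Rbar_le_refl.
  exact: (J_antitone (T1 := Finite 0) (T2 := Finite T) pi (Rle_refl 0) Hlt).
- exact: (J_antitone (T1 := Finite 0) (T2 := p_infty) pi (Rle_refl 0) I).
Qed.

Lemma J_fin_approx (pi : Strategy) T r eps : Rbar_le 0 T -> Finite r = J T pi -> 0 < eps ->
  exists s, 0 <= s /\ Rbar_le (J_fin phi pi s) (r + eps).
Proof.
case: T => [T| |] //= HT Hr He.
- by exists T; split => //; rewrite -Hr /=; lra.
- case: (Glb_Rbar_approx (Logic.eq_sym Hr) He) => x [[T0 [HT0 Hx]] Hlt].
  by exists T0; split => //; rewrite -Hx /=; lra.
Qed.

(* [J_T(pi) <= J_0(pi)] gives [J*_T <= J*_0]; conversely, shifting [pi] by some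
   [s] with [J_s(pi)] close to [J_T(pi)] gives [J*_0 <= J*_T]. *)
Lemma Jstar_const T : Rbar_le 0 T -> Jstar T = Jstar (Finite 0).
Proof.
move=> HT; rewrite /Jstar /Rbar_inf.
apply: Rbar_le_antisym; apply: Glb_Rbar_le_approx => r [pi [Hf Hr]] eps He.
- have HTr : Rbar_le (J T pi) r by rewrite Hr; apply: J_le_J0.
  case: (Rbar_finite_between (J_ge0 pi HT) HTr) => r' [Hr' Hle].
  by exists r'; split; [exists pi | lra].
- case: (J_fin_approx HT Hr He) => s [Hs Hsr].
  have H1 := Rbar_le_trans _ _ _ (J0_shift_le pi Hs) Hsr.
  case: (Rbar_finite_between (J_ge0 _ (Rle_refl 0 : Rbar_le 0 (Finite 0))) H1) => r' [Hr' Hle].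
  by exists r'; split => //; exists (shift_strategy pi s); split => //; apply: shift_feasible.
Qed.

Lemma optimal_mono T1 T2 (pi : Strategy) : Rbar_le 0 T1 -> Rbar_lt T1 T2 ->
  optimal (k:=k) src tgt A phi T1 pi -> optimal (k:=k) src tgt A phi T2 pi.
Proof.
move=> H1 H12 [Hf HJ]; split => //.
have H2 : Rbar_le 0 T2 by apply: Rbar_le_trans H1 (Rbar_lt_le _ _ H12).
apply: Rbar_le_antisym; last exact: Jstar_le_J.
by rewrite (Jstar_const H2) -(Jstar_const H1) -HJ; apply: J_antitone.
Qed.

End Objective.

(** * Limits of strategies *)

Section Compactness.
Variables (V E : finType) (src tgt : E -> V) (A : E -> R) (k : nat).
Hypothesis HA : forall e, 0 < A e.
Hypothesis Hconn : connected src tgt.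
Variable i0 : 'I_k.

Local Notation d := (Defs.dist src tgt A).
Local Notation valid := (valid_point A).
Local Notation feasible := (feasible src tgt A (k:=k)).
Local Notation converges := (converges src tgt A).
Local Notation Strategy := (Strategy V E k).
Local Notation triangle := (dist_triangle HA Hconn).

Lemma extract_converges_on_grid (rho : nat -> Strategy) : (forall n, feasible (rho n)) ->
  exists chi, (forall n, (n <= chi n)%coq_nat) /\
    forall m l i, exists q, valid q /\ converges (fun n => rho (chi n) (grid m l) i) q.
Proof.
move=> Hrho; pose X n j := if @pickle_inv (nat * nat * 'I_k)%type j is Some p
  then rho n (grid p.1.1 p.1.2) p.2 else rho n 0 i0.
have HX : forall n j, valid (X n j).
  move=> n j; case/feasibleP: (Hrho n) => Hv _; rewrite /X.
  by case: pickle_inv => [p|]; apply: Hv; [apply: grid_ge0 | lra].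
case: (diagonal_extract HA Hconn HX) => chi [Hchi Hcvg]; exists chi; split => // m l i.
by case: (Hcvg (pickle (m, l, i))) => q; rewrite /X pickleK_inv; exists q.
Qed.

(* Equicontinuity: the strategies are 1-Lipschitz, so convergence on the dense
   grid propagates to every time. *)
Lemma converges_everywhere (rho : nat -> Strategy) : (forall n, feasible (rho n)) ->
  (forall m l i, exists q, valid q /\ converges (fun n => rho n (grid m l) i) q) ->
  forall t i, 0 <= t -> exists q, valid q /\ converges (fun n => rho n t i) q.
Proof.
move=> Hrho Hgrid t i Ht.
have Hv : forall n s, 0 <= s -> valid (rho n s i).
  by move=> n s Hs; case/feasibleP: (Hrho n) => H _; apply: H.
have Hl : forall n s s', 0 <= s -> 0 <= s' -> d (rho n s i) (rho n s' i) <= Rabs (s - s').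
  by move=> n s s' Hs Hs'; case/feasibleP: (Hrho n) => _ H; apply: H.
apply: cauchy_converges => // [n|eps He]; first exact: Hv.
case: (grid_dense Ht (ltac:(lra) : 0 < eps / 4)) => m [l Hml].
case: (Hgrid m l i) => q [Hqv Hq]; have Hg := grid_ge0 m l.
case: (Hq _ (ltac:(lra) : 0 < eps / 4)) => N HN; exists N => n n' Hn Hn'.
have := HN n Hn; have := HN n' Hn'; rewrite (dist_sym _ _ _ (rho n' _ i)) => Cn' Cn.
have := Hl n t (grid m l) Ht Hg; have := Hl n' (grid m l) t Hg Ht.
rewrite Rabs_minus_sym => H1 H2.
have := triangle (Hv n t Ht) (Hv n _ Hg) (Hv n' t Ht).
have := triangle (Hv n _ Hg) Hqv (Hv n' t Ht).
have := triangle Hqv (Hv n' _ Hg) (Hv n' t Ht).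
lra.
Qed.

Lemma limit_feasible (rho : nat -> Strategy) (pi : Strategy) :
  (forall n, feasible (rho n)) ->
  (forall t i, 0 <= t -> valid (pi t i) /\ converges (fun n => rho n t i) (pi t i)) ->
  feasible pi.
Proof.
move=> Hrho Hpi; apply/feasibleP; split=> [t i Ht|t t' i Ht Ht']; first by case: (Hpi t i Ht).
apply: Rle_plus_epsilon => eps He.
case: (Hpi t i Ht) => Hv1 /(_ _ (ltac:(lra) : 0 < eps / 2)) [N1 HN1].
case: (Hpi t' i Ht') => Hv2 /(_ _ (ltac:(lra) : 0 < eps / 2)) [N2 HN2].
pose n := Nat.max N1 N2; case/feasibleP: (Hrho n) => Hv Hl.
have := HN1 n ltac:(lia); have := HN2 n ltac:(lia); rewrite (dist_sym _ _ _ (rho n t i)) => C2 C1.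
have := Hl t t' i Ht Ht'.
have := triangle Hv1 (Hv t i Ht) Hv2; have := triangle (Hv t i Ht) (Hv t' i Ht') Hv2.
lra.
Qed.

Lemma limit_strategy (rho : nat -> Strategy) : (forall n, feasible (rho n)) ->
  exists chi pi, (forall n, (n <= chi n)%coq_nat) /\ feasible pi /\
    forall t i, 0 <= t -> converges (fun n => rho (chi n) t i) (pi t i).
Proof.
move=> Hrho; case: (extract_converges_on_grid Hrho) => chi [Hchi Hgrid].
have Hall := converges_everywhere (fun n => Hrho (chi n)) Hgrid.
have Hlim : forall p : R * 'I_k, exists q, 0 <= p.1 ->
    valid q /\ converges (fun n => rho (chi n) p.1 p.2) q.
  move=> [t i] /=; case: (classic (0 <= t)) => Ht; last by exists (rho 0%nat 0 i).
  by case: (Hall t i Ht) => q Hq; exists q.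
case: (functional_choice _ Hlim) => f Hf.
have Hpi : forall t i, 0 <= t ->
    valid (f (t, i)) /\ converges (fun n => rho (chi n) t i) (f (t, i)).
  by move=> t i Ht; apply: (Hf (t, i)).
exists chi, (fun t i => f (t, i)); split => //; split.
- exact: (limit_feasible (fun n => Hrho (chi n)) Hpi).
- by move=> t i Ht; case: (Hpi t i Ht).
Qed.

Section Limits.
Variables (rho : nat -> Strategy) (pi : Strategy).
Hypothesis Hrho : forall n, feasible (rho n).
Hypothesis Hpi : feasible pi.
Hypothesis Hcvg : forall t i, 0 <= t -> converges (fun n => rho n t i) (pi t i).

Lemma visit_limit v r tau chi (tau_ : nat -> R) : (forall n, (n <= chi n)%coq_nat) ->
  0 <= tau -> (forall n, 0 <= tau_ n) ->
  (forall eps, 0 < eps -> exists N, forall n, (N <= n)%coq_nat -> Rabs (tau_ n - tau) < eps) ->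
  (forall n, rho (chi n) (tau_ n) r = PV E v) -> pi tau r = PV E v.
Proof.
move=> Hchi Htau Htau_ Hlim Hvis; case/feasibleP: Hpi => Hv _.
apply: (dist_node_eq HA Hconn (Hv tau r Htau)); apply: Rle_plus_epsilon => eps He.
case: (converges_extract Hchi (Hcvg r Htau) (ltac:(lra) : 0 < eps / 2)) => N1 HN1.
case: (Hlim _ (ltac:(lra) : 0 < eps / 2)) => N2 HN2.
pose n := Nat.max N1 N2; case/feasibleP: (Hrho (chi n)) => Hvn Hln.
have := HN1 n ltac:(lia); have := HN2 n ltac:(lia); rewrite dist_sym => C2 C1.
have := Hln tau (tau_ n) r Htau (Htau_ n); rewrite Rabs_minus_sym.
have := triangle (Hv tau r Htau) (Hvn tau r Htau) (Hvn (tau_ n) r (Htau_ n)).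
by rewrite Hvis; lra.
Qed.

(* Extract a single robot and converging visit times. *)
Lemma visits_limit v t L c N : 0 < c ->
  (forall n, (N <= n)%coq_nat -> exists r tau, 0 <= tau <= t /\ rho n tau r = PV E v /\
     t - L - c * / (INR n + 1) < tau) ->
  exists r tau, 0 <= tau <= t /\ pi tau r = PV E v /\ t - L <= tau.
Proof.
move=> Hc Hvis.
have {Hvis} : forall n, exists p : 'I_k * R, 0 <= p.2 <= t /\ rho (n + N) p.2 p.1 = PV E v /\
    t - L - c * / (INR (n + N) + 1) < p.2.
  by move=> n; case: (Hvis (n + N)%coq_nat ltac:(lia)) => r [tau H]; exists (r, tau).
case/functional_choice => p Hp.
case: (finite_valued_extract (fun n => (p n).1)) => r [chi1 [Hchi1 Hr]].
case: (@bounded_extract_cvg (fun m => (p (chi1 m)).2) 0 t) => [m|chi2 [tau [Hchi2 [Htau Hlim]]]].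
  by case: (Hp (chi1 m)).
have Hchi : forall m, (m <= chi1 (chi2 m) + N)%coq_nat.
  by move=> m; have := Hchi1 (chi2 m); have := Hchi2 m; lia.
exists r, tau; split => //; split.
- apply: (@visit_limit v r tau (fun m => chi1 (chi2 m) + N)%coq_nat
           (fun m => (p (chi1 (chi2 m))).2)) => //.
  + by lra.
  + by move=> m; case: (Hp (chi1 (chi2 m))) => [[]].
  + by move=> m; case: (Hp (chi1 (chi2 m))) => _ [<- _]; rewrite Hr.
- apply: Rle_plus_epsilon => eps He.
  case: (Hlim _ (ltac:(lra) : 0 < eps / 2)) => N1 HN1.
  case: (inv_succ_small (ltac:(apply: Rdiv_lt_0_compat; lra) : 0 < eps / 2 / c)) => N2 HN2.
  pose m := Nat.max N1 N2; have := HN1 m ltac:(lia).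
  have := HN2 (chi1 (chi2 m) + N)%coq_nat ltac:(have := Hchi m; lia).
  case: (Hp (chi1 (chi2 m))) => _ [_ Hlate] Hsmall Hclose.
  have : c * / (INR (chi1 (chi2 m) + N) + 1) < eps / 2.
    by replace (eps / 2) with (c * (eps / 2 / c)) by (field; lra); apply: Rmult_lt_compat_l.
  by have := Rle_abs ((p (chi1 (chi2 m))).2 - tau); lra.
Qed.

Lemma latency_limit_le v t L c : 0 <= t -> 0 < c ->
  (forall n, latency (rho n) v t <= L + c * / (INR n + 1)) -> latency pi v t <= L.
Proof.
move=> Ht Hc Hlat.
have Hrecent : forall n, t <= L + 2 * c * / (INR n + 1) \/ exists r tau, 0 <= tau <= t /\
    rho n tau r = PV E v /\ t - L - 2 * c * / (INR n + 1) < tau.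
  move=> n; have Hpos : 0 < c * / (INR n + 1).
    by apply: Rmult_lt_0_compat => //; apply: inv_succ_pos.
  case: (recent_visit Ht (Hlat n) Hpos) => [H|[r [tau [H1 [H2 H3]]]]]; first by left; lra.
  by right; exists r, tau; split => //; split => //; lra.
case: (classic (exists N, forall n, (N <= n)%coq_nat -> t <= L + 2 * c * / (INR n + 1) -> False)).
- case=> N HN; case: (@visits_limit v t L (2 * c) N) => [|n Hn|r [tau [Htau [Hr HL]]]]; first lra.
    by case: (Hrecent n) => // /(HN n Hn).
  have Hvis : visit_times pi v t tau by split => //; exists r.
  by have := latency_le_of_visit Hvis; lra.
- move=> Hn; suff : t <= L by have := latency_le_time pi v Ht; lra.
  apply: (@le_of_le_inv_succ_often t L (2 * c)); first lra.
  move=> N; apply: NNPP => HN; apply: Hn; exists N => n Hnn Ht'; apply: HN; exists n.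
  by split => //; rewrite -Rmult_assoc.
Qed.

End Limits.

End Compactness.

(** * Optimal strategies *)

Section Optimal.
Variables (V E : finType) (src tgt : E -> V) (A : E -> R) (phi : V -> R) (k : nat).
Hypothesis HA : forall e, 0 < A e.
Hypothesis Hconn : connected src tgt.
Hypothesis Hphi : forall v, 0 < phi v.

Local Notation feasible := (feasible src tgt A (k:=k)).
Local Notation M := (weighted_max_latency phi (k:=k)).
Local Notation Strategy := (Strategy V E k).
Local Notation J := (J phi (k:=k)).
Local Notation Jstar := (Jstar src tgt A phi k).

Lemma Jstar0_ge0 : Rbar_le 0 (Jstar (Finite 0)).
Proof.
rewrite /Jstar /Rbar_inf; apply: Glb_Rbar_ge => r [pi [_ Hr]].
by have := J_fin_ge0 Hphi pi (Rle_refl 0); move: Hr => /= <-.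
Qed.

Lemma Jstar0_approx j eps : Jstar (Finite 0) = Finite j -> 0 < eps ->
  exists pi, feasible pi /\ forall t, 0 <= t -> M pi t <= j + eps.
Proof.
move=> HJ He; case: (Glb_Rbar_approx HJ He) => x [[pi [Hf Hx]] Hlt].
exists pi; split => // t Ht.
by have := J_fin_ge phi pi Ht; move: Hx => /= <- /=; lra.
Qed.

Lemma optimal_strategy_exists j : 'I_k -> Jstar (Finite 0) = Finite j ->
  exists pi, feasible pi /\ forall t, 0 <= t -> M pi t <= j.
Proof.
move=> i0 HJ; have Hj : 0 <= j by have := Jstar0_ge0; rewrite HJ.
have : forall n, exists pi, feasible pi /\ forall t, 0 <= t -> M pi t <= j + / (INR n + 1).
  by move=> n; apply: Jstar0_approx => //; apply: inv_succ_pos.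
case/functional_choice => rho Hrho.
case: (limit_strategy HA Hconn i0 (fun n => proj1 (Hrho n))) => chi [pi [Hchi [Hpi Hcvg]]].
exists pi; split => // t Ht; apply: max_latency_le => // v.
have Hv := Hphi v; apply: (weighted_latency_le Hphi).
apply: (latency_limit_le HA Hconn (fun n => proj1 (Hrho (chi n))) Hpi Hcvg Ht
                         (Rinv_0_lt_compat _ Hv)).
move=> n; have Hb : M (rho (chi n)) t <= j + / (INR n + 1).
  case: (Hrho (chi n)) => _ /(_ t Ht) H; apply: Rle_trans H _.
  by apply: Rplus_le_compat_l; apply: inv_succ_le.
apply: Rle_trans (latency_le_of_max Hphi v Hb) _.
by apply: Req_le; field; split; [have := pos_INR n | ]; lra.
Qed.

Definition prepend (G : 'I_k -> R -> Point V E) (c : R) (pi : Strategy) : Strategy :=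
  fun t i => splice c (G i) (fun t => pi (t - c) i) t.

Section Prepend.
Variables (p0 : Config V E k) (G : 'I_k -> R -> Point V E) (c : R) (pi : Strategy).
Hypothesis Hc : 0 <= c.
Hypothesis Hpi : feasible pi.
Hypothesis HG : forall i, curve src tgt A (p0 i) (pi 0 i) c (G i).

Lemma prepend_feasible : feasible (prepend G c pi).
Proof.
case/feasibleP: Hpi => Hv Hl; apply/feasibleP; split => [t i Ht|t t' i _ _].
- by rewrite /prepend /splice; case: Rle_dec => H /=; [case: (HG i) => _ [] | apply: Hv; lra].
- case: (HG i) => _ [VG [LG [_ EG]]].
  apply: (splice_lipschitz HA Hconn) => [u _|u Hu|//|u u' _ _|u u' Hu Hu'] //.
  + by apply: Hv; lra.
  + by rewrite Rminus_diag EG //; lra.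
  + have := Hl (u - c) (u' - c) i ltac:(lra) ltac:(lra).
    by replace (u - c - (u' - c)) with (u - u') by ring.
Qed.

Lemma prepend_start i : prepend G c pi 0 i = p0 i.
Proof.
case: (HG i) => _ [_ [_ [H0 _]]].
by rewrite /prepend /splice; case: Rle_dec => H //=; lra.
Qed.

Lemma prepend_latency v t : c <= t -> 0 < last_visit pi v (t - c) ->
  latency (prepend G c pi) v t <= latency pi v (t - c).
Proof.
move=> Ht Hlv; rewrite /latency.
suff : last_visit pi v (t - c) + c <= last_visit (prepend G c pi) v t by lra.
apply: last_visit_transfer; [lra | | by right].
move=> tau [[Htau0 Htau] [r Hr]] _; split; first lra.
exists r; rewrite /prepend /splice; case: Rle_dec => H /=; last first.
  by replace (tau + c - c) with tau by ring.
case: (HG r) => _ [_ [_ [_ EG]]]; rewrite EG; last lra.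
have E0 : tau = 0 by lra.
by rewrite -E0.
Qed.

(* After the prefix the latencies are those of [pi], delayed by [c]; a node
   with latency at most [j / phi v < t - c] has been visited after the prefix. *)
Lemma prepend_max_latency_le j m t : 0 < m -> (forall v, m <= phi v) ->
  (forall s, 0 <= s -> M pi s <= j) -> c + j / m < t -> M (prepend G c pi) t <= j.
Proof.
move=> Hm Hmle Hpij Ht.
have Hj : 0 <= j by have := Hpij 0 (Rle_refl 0); have := max_latency_ge0 Hphi pi (Rle_refl 0); lra.
have Hjm : 0 <= j / m by apply: Rdiv_le_0_compat; lra.
apply: max_latency_le => // v; have Hv := Hphi v.
have Hlat : latency pi v (t - c) <= j / phi v by apply: (latency_le_of_max Hphi); apply: Hpij; lra.
have Hjv : j / phi v <= j / m.
  by apply: (Rmult_le_compat_l _ _ _ Hj); apply: Rinv_le_contravar (Hmle v).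
have Hpos : 0 < last_visit pi v (t - c) by move: Hlat; rewrite /latency; lra.
apply: (weighted_latency_le Hphi); apply: Rle_trans Hlat.
by apply: prepend_latency => //; lra.
Qed.

End Prepend.

End Optimal.

Lemma phi_min_spec (V : finType) (phi : V -> R) : inhabited V -> (forall v, 0 < phi v) ->
  0 < phi_min phi /\ forall v, phi_min phi <= phi v.
Proof.
move=> [v0] Hphi; case: (finite_pos_lb Hphi) => m [Hm Hmle].
have Hv0 : exists v, phi v0 = phi v by exists v0.
have Hm' : forall r, (exists v, r = phi v) -> m <= r by move=> r [v ->].
case: (Glb_Rbar_finite Hv0 Hm') => g [Hg [Hlb [Hglb _]]].
rewrite /phi_min Hg /=; split; first by have := Hglb m Hm'; lra.
by move=> v; apply: Hlb; exists v.
Qed.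

Lemma dist_le_diameter (V E : finType) (src tgt : E -> V) (A : E -> R) x y :
  valid_point A x -> valid_point A y -> Rbar_le (Defs.dist src tgt A x y) (diameter src tgt A).
Proof. by move=> Hx Hy; apply: Lub_Rbar_ub; exists x, y. Qed.

Lemma Rbar_plus_mult_lt_finite (D J : Rbar) (a T : R) : Rbar_le 0 D -> Rbar_le 0 J -> 0 < a ->
  Rbar_lt (Rbar_plus D (Rbar_mult J a)) T ->
  exists Dg j, D = Finite Dg /\ J = Finite j /\ Dg + j * a < T.
Proof.
case: D => [Dg| |] //= HD; case: J => [j| |] //= HJ Ha; try by exists Dg, j.
all: rewrite /Rbar_mult /=; case: Rle_dec => H1 //=; [case: Rle_lt_or_eq_dec => H2 //=; lra | lra].
Qed.

Lemma optimal_from_start (V E : finType) (src tgt : E -> V) (A : E -> R) (phi : V -> R) (k : nat)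
  (HV : inhabited V) (HA : forall e, 0 < A e) (Hconn : connected src tgt)
  (Hphi : forall v, 0 < phi v) (i0 : 'I_k) (p0 : Config V E k) (T : R) :
  valid_config A p0 ->
  Rbar_lt (Rbar_plus (diameter src tgt A)
    (Rbar_mult (Jstar src tgt A phi k (Finite 0)) (Finite (/ phi_min phi)))) (Finite T) ->
  exists pi, optimal (k:=k) src tgt A phi (Finite T) pi /\ forall i, pi 0 i = p0 i.
Proof.
move=> Hp0 HT; case: (phi_min_spec HV Hphi) => Hm Hmle; case: HV => v0.
have HD0 : Rbar_le 0 (diameter src tgt A).
  have Hv0 : valid_point A (PV E v0) by [].
  move: (dist_le_diameter src tgt Hv0 Hv0) (dist_ge0 HA Hconn Hv0 Hv0).
  by case: (diameter src tgt A) => //= D0; lra.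
case: (Rbar_plus_mult_lt_finite HD0 (Jstar0_ge0 src tgt A k Hphi) (Rinv_0_lt_compat _ Hm) HT)
  => D [j [ED [EJ HDj]]].
case: (optimal_strategy_exists HA Hconn Hphi i0 EJ) => ps [Hps Hpsj].
pose c := (D + (T - j / phi_min phi)) / 2.
have HDc : D < c by rewrite /c /Rdiv in HDj *; lra.
have HcT : c + j / phi_min phi < T by rewrite /c /Rdiv in HDj *; lra.
have Hc0 : 0 <= c by have := HD0; rewrite ED /=; lra.
have : forall i, exists g, curve src tgt A (p0 i) (ps 0 i) c g.
  move=> i; case/feasibleP: Hps => Hv _; apply: (dist_curve HA Hconn (Hp0 i) (Hv 0 i (Rle_refl 0))).
  by have := dist_le_diameter src tgt (Hp0 i) (Hv 0 i (Rle_refl 0)); rewrite ED /=; lra.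
case/functional_choice => G HG.
have Hfeas := prepend_feasible HA Hconn Hps HG.
have Hjm : 0 <= j / phi_min phi.
  by apply: Rdiv_le_0_compat => //; have := Jstar0_ge0 src tgt A k Hphi; rewrite EJ.
have HT0 : Rbar_le 0 (Finite T) by rewrite /=; lra.
exists (prepend G c ps); split; last exact: (prepend_start Hc0 HG).
split => //; apply: Rbar_le_antisym; last exact: Jstar_le_J.
rewrite (Jstar_const src tgt A k Hphi HT0) EJ; apply: J_fin_le => t Ht.
by apply: (prepend_max_latency_le Hphi Hc0 HG Hm Hmle Hpsj); lra.
Qed.

Unset Implicit Arguments.

Theorem mainTheorem2
  (V E : finType) (src tgt : E -> V) (A : E -> R) (phi : V -> R) (k : nat)
  (HV : inhabited V)
  (Hsimple : simple_graph src tgt)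
  (Hconn : connected src tgt)
  (HA : forall e, 0 < A e)
  (Hphi : forall v, 0 < phi v)
  (Hk : (1 <= k)%nat) :
  (forall T : Rbar, Rbar_le (Finite 0) T ->
     Jstar src tgt A phi k T = Jstar src tgt A phi k (Finite 0)) /\
  (forall T1 T2 : Rbar, Rbar_le (Finite 0) T1 -> Rbar_lt T1 T2 ->
     forall pi, optimal (k:=k) src tgt A phi T1 pi -> optimal (k:=k) src tgt A phi T2 pi) /\
  (forall p0 : Config V E k, valid_config A p0 ->
   forall T : R,
     Rbar_lt (Rbar_plus (diameter src tgt A)
                        (Rbar_mult (Jstar src tgt A phi k (Finite 0)) (Finite (/ phi_min phi))))
             (Finite T) ->
     exists pi, optimal (k:=k) src tgt A phi (Finite T) pi /\ forall i, pi 0 i = p0 i).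
Proof.
split; first by move=> T; apply: Jstar_const.
split; first by move=> T1 T2 H1 H12 pi; apply: optimal_mono.
by move=> p0 Hp0 T; apply: (optimal_from_start HV HA Hconn Hphi (Ordinal Hk)).
Qed.
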